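(* Let $A_1,A_2,A_3$ be $m\times m$ complex positive semidefinite matrices. Then $$\det(A_1+A_2+A_3)+\det A_1+\det A_2+\det A_3\;\ge\;\det(A_1+A_2)+\det(A_1+A_3)+\det(A_2+A_3).$$ *)

From HB Require Import structures.
From mathcomp Require Import all_boot all_order all_algebra.
Set Implicit Arguments. Unset Strict Implicit. Unset Printing Implicit Defensive.
Import Order.TTheory GRing.Theory Num.Theory.
Local Open Scope ring_scope.

Definition ctrmx (C : numClosedFieldType) (m n : nat) (A : 'M[C]_(m, n))
  : 'M[C]_(n, m) := (map_mx Num.conj A)^T.

Definition psd (C : numClosedFieldType) (m : nat) (A : 'M[C]_m) : Prop :=
  ctrmx A = A /\
  forall x : 'cV[C]_m, 0 <= (ctrmx x *m A *m x) 0 0.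

From HB Require Import structures.
From mathcomp Require Import all_boot all_order all_algebra perm.
Set Implicit Arguments. Unset Strict Implicit. Unset Printing Implicit Defensive.
Import Order.TTheory GRing.Theory Num.Theory.
Local Open Scope ring_scope.
Local Open Scope sesquilinear_scope.

(* Diagonalizing A_k = sum_j lambda_kj v_kj^* v_kj and expanding by Cauchy-Binet
   gives, for every set S of indices,
     m! det (sum_(k in S) A_k) = sum_f [f only uses eigenvectors of A_k, k in S] t_f
   with all t_f >= 0.  The inequality thus holds term by term, since it reduces
   to the same inequality between the indicators [U \subset S] of the set U of
   indices used by f: U cannot lie in two of the pairs {1,2}, {1,3}, {2,3}
   without lying in a singleton. *)

Section CauchyBinet.

Variables (R : comNzRingType) (m : nat) (J : finType).
Variables (x : 'I_m -> J -> R) (y : J -> 'I_m -> R).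

Lemma det_mul_expand :
  \det (\matrix_(i, l) \sum_j x i j * y j l) =
  \sum_(f : {ffun 'I_m -> J}) (\prod_i x i (f i)) * \det (\matrix_(i, l) y (f i) l).
Proof.
rewrite /determinant.
under eq_bigr => s _.
  under eq_bigr => i _ do rewrite mxE.
  rewrite bigA_distr_bigA big_distrr /=.
  under eq_bigr => f _ do rewrite big_split /= mulrCA.
  over.
rewrite exchange_big /=; apply: eq_bigr => f _; rewrite big_distrr /=.
by apply: eq_bigr => s _; congr (_ * (_ * _)); apply: eq_bigr => i _; rewrite mxE.
Qed.

(* Summing over all maps f rather than over increasing injections counts every
   term m! times. *)
Lemma det_mul_Cauchy_Binet :
  m`!%:R * \det (\matrix_(i, l) \sum_j x i j * y j l) =
  \sum_(f : {ffun 'I_m -> J})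
     \det (\matrix_(i, k) x i (f k)) * \det (\matrix_(i, l) y (f i) l).
Proof.
rewrite mulr_natl -card_Sn -sumr_const.
have expand_perm (s : 'S_m) : \det (\matrix_(i, l) \sum_j x i j * y j l) =
    \sum_(f : {ffun 'I_m -> J})
      (-1) ^+ s * (\prod_i x i (f (s i))) * \det (\matrix_(i, l) y (f i) l).
  pose fs (f : {ffun 'I_m -> J}) := [ffun i => f (s i)].
  rewrite det_mul_expand (reindex_inj (h := fs)).
    apply: eq_bigr => f _; under eq_bigr => i _ do rewrite ffunE.
    have -> : \matrix_(i, l) y (fs f i) l =
              row_perm s (\matrix_(i, l) y (f i) l).
      by apply/matrixP => i l; rewrite !mxE ffunE.
    by rewrite row_permE det_mulmx det_perm mulrCA mulrA.
  move=> f g /ffunP fg; apply/ffunP => i.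
  by have := fg (s^-1 i)%g; rewrite !ffunE permKV.
under eq_bigr => s _ do rewrite (expand_perm s).
rewrite exchange_big /=; apply: eq_bigr => f _.
rewrite -big_distrl /=; congr (_ * _).
by apply: eq_bigr => s _; congr (_ * _); apply: eq_bigr => i _; rewrite mxE.
Qed.

End CauchyBinet.

Lemma prodr_nat_forall (R : pzSemiRingType) (I : finType) (b : I -> bool) :
  \prod_i (b i)%:R = [forall i, b i]%:R :> R.
Proof.
have nat_of_andb : {morph nat_of_bool : b1 b2 / b1 && b2 >-> (b1 * b2)%N}.
  by move=> b1 b2; rewrite mulnb.
by rewrite -natr_prod -(big_morph _ nat_of_andb (id1 := 1%N) (id2 := true)) ?big_andE.
Qed.

Lemma det_sum_rank1 (R : comNzRingType) m (J : finType)
    (c : J -> R) (u : J -> 'cV[R]_m) (v : J -> 'rV[R]_m) :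
  m`!%:R * \det (\sum_j c j *: (u j *m v j)) =
  \sum_(f : {ffun 'I_m -> J}) (\prod_i c (f i)) *
     (\det (\matrix_(i, k) u (f k) i 0) * \det (\matrix_(i, l) v (f i) 0 l)).
Proof.
have -> : \sum_j c j *: (u j *m v j) =
          \matrix_(i, l) \sum_j u j i 0 * (c j * v j 0 l).
  apply/matrixP => i l; rewrite summxE mxE; apply: eq_bigr => j _.
  by rewrite !mxE big_ord1 mulrCA.
rewrite det_mul_Cauchy_Binet; apply: eq_bigr => f _.
have -> : \matrix_(i, l) (c (f i) * v (f i) 0 l) =
          diag_mx (\row_i c (f i)) *m \matrix_(i, l) v (f i) 0 l.
  by rewrite mul_diag_mx; apply/matrixP => i l; rewrite !mxE.
rewrite det_mulmx det_diag mulrCA; congr (_ * _).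
by apply: eq_bigr => i _; rewrite mxE.
Qed.

Lemma mulmx_diag_sum_rank1 (R : comNzRingType) m n
    (X : 'M[R]_(m, n)) (d : 'rV[R]_n) (Y : 'M[R]_(n, m)) :
  X *m diag_mx d *m Y = \sum_j d 0 j *: (col j X *m row j Y).
Proof.
rewrite diag_mx_sum_delta mulmx_sumr mulmx_suml; apply: eq_bigr => j _.
by rewrite -scalemxAr -scalemxAl -(mul_delta_mx (0 : 'I_1)) mulmxA -colE -mulmxA -rowE.
Qed.

Section PositiveSemidefinite.

Variables (C : numClosedFieldType) (m : nat).

Lemma ctrmxE n p (A : 'M[C]_(n, p)) : ctrmx A = A^t*.
Proof. by rewrite /ctrmx map_trmx. Qed.

Lemma trmxC_row n (P : 'M[C]_(n, m)) i : (row i P)^t* = col i (P^t*).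
Proof. by rewrite tr_row map_col. Qed.

Lemma psd_hermsymmx (A : 'M[C]_m) : psd A -> A \is hermsymmx.
Proof.
move=> [A_herm _]; rewrite is_hermitianmxE expr0 scale1r; apply/eqP.
by rewrite -{1}A_herm ctrmxE.
Qed.

Lemma psd_spectral (A : 'M[C]_m) : psd A ->
  A = (spectralmx A)^t* *m diag_mx (spectral_diag A) *m spectralmx A.
Proof.
move=> /psd_hermsymmx /hermitian_normalmx /orthomx_spectralP {1}->.
by rewrite invmx_unitary // spectral_unitarymx.
Qed.

Lemma psd_spectral_diag_ge0 (A : 'M[C]_m) j : psd A -> 0 <= spectral_diag A 0 j.
Proof.
move=> psdA; set P := spectralmx A.
have P_unitary : P *m P^t* = 1%:M by apply/unitarymxP/spectral_unitarymx.
have PAP : P *m A *m P^t* = diag_mx (spectral_diag A).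
  by rewrite {1}(psd_spectral psdA) !mulmxA P_unitary mul1mx -!mulmxA P_unitary mulmx1.
have := psdA.2 (col j (P^t*)).
rewrite ctrmxE -{1}trmxC_row trmxCK colE mulmxA -!row_mul -colE PAP.
by rewrite !mxE eqxx mulr1n.
Qed.

End PositiveSemidefinite.

Lemma det_psd_sum_expand (C : numClosedFieldType) m (K : finType) (A : K -> 'M[C]_m) :
  (forall k, psd (A k)) ->
  exists2 t : {ffun 'I_m -> K * 'I_m} -> C, (forall f, 0 <= t f) &
    forall S : pred K,
      m`!%:R * \det (\sum_(k | S k) A k) =
      \sum_(f : {ffun 'I_m -> K * 'I_m}) [forall i, S (f i).1]%:R * t f.
Proof.
move=> psdA; pose d k := spectral_diag (A k).
pose v k j := row j (spectralmx (A k)).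
exists (fun f : {ffun _} => (\prod_i d (f i).1 0 (f i).2) *
                             `|\det (\matrix_(i, l) v (f i).1 (f i).2 0 l)| ^+ 2).
  move=> f; rewrite mulr_ge0 ?exprn_ge0 // prodr_ge0 // => i _.
  exact: psd_spectral_diag_ge0.
move=> S.
have -> : \sum_(k | S k) A k =
          \sum_kj ((S kj.1)%:R * d kj.1 0 kj.2) *: ((v kj.1 kj.2)^t* *m v kj.1 kj.2).
  rewrite -(pair_bigA _ (fun k j => ((S k)%:R * d k 0 j) *: ((v k j)^t* *m v k j))).
  rewrite big_mkcond /=; apply: eq_bigr => k _.
  under eq_bigr => j _ do rewrite -scalerA trmxC_row.
  rewrite -scaler_sumr -mulmx_diag_sum_rank1 -psd_spectral //.
  by case: (S k); rewrite ?scale1r ?scale0r.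
rewrite det_sum_rank1; apply: eq_bigr => f _.
rewrite big_split /= prodr_nat_forall -mulrA normCK [X in _ * (_ * X)]mulrC.
congr (_ * (_ * (_ * _))).
have -> : \matrix_(i, k) (v (f k).1 (f k).2)^t* i 0 =
          (\matrix_(i, l) v (f i).1 (f i).2 0 l)^t*.
  by apply/matrixP => i k; rewrite !mxE.
by rewrite det_map_mx det_tr.
Qed.

Lemma leq_bool_pairs (a b c x y z : bool) :
  a && b ==> x -> a && c ==> y -> b && c ==> z -> (a + b + c <= 1 + x + y + z)%N.
Proof. by case: a; case: b; case: c; case: x; case: y; case: z. Qed.

Lemma forall_in_meet (I : finType) (g : I -> nat) (s1 s2 s : seq nat) :
  (forall n, n \in s1 -> n \in s2 -> n \in s) ->
  [forall i, g i \in s1] && [forall i, g i \in s2] ==> [forall i, g i \in s].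
Proof.
move=> meet; apply/implyP => /andP[/forallP g_s1 /forallP g_s2].
by apply/forallP => i; apply: meet.
Qed.

Lemma forall_in_pairs_le m (g : 'I_m -> 'I_3) :
  ([forall i, val (g i) \in [:: 0; 1]] + [forall i, val (g i) \in [:: 0; 2]] +
   [forall i, val (g i) \in [:: 1; 2]] <=
   [forall i, val (g i) \in [:: 0; 1; 2]] + [forall i, val (g i) \in [:: 0]] +
   [forall i, val (g i) \in [:: 1]] + [forall i, val (g i) \in [:: 2]])%N.
Proof.
have -> : [forall i, val (g i) \in [:: 0; 1; 2]].
  by apply/forallP => i; case: (g i) => [[|[|[|]]]].
by apply: leq_bool_pairs; apply: forall_in_meet => n; rewrite !inE => /orP[]/eqP->.
Qed.

Theorem corollary3p2 (C : numClosedFieldType) (m : nat) (A1 A2 A3 : 'M[C]_m) :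
  psd A1 -> psd A2 -> psd A3 ->
  \det (A1 + A2) + \det (A1 + A3) + \det (A2 + A3)
    <= \det (A1 + A2 + A3) + \det A1 + \det A2 + \det A3.
Proof.
move=> psdA1 psdA2 psdA3.
pose A (k : 'I_3) := [:: A1; A2; A3]`_k.
have psdA k : psd (A k) by case: k => [[|[|[|]]]].
have [t t_ge0 detE] := det_psd_sum_expand psdA.
have detS (s : seq nat) :
    m`!%:R * \det ((0 \in s)%:R *: A1 + (1 \in s)%:R *: A2 + (2 \in s)%:R *: A3) =
    \sum_(f : {ffun 'I_m -> 'I_3 * 'I_m}) [forall i, val (f i).1 \in s]%:R * t f.
  rewrite -(detE (fun k => val k \in s)) big_mkcond !big_ord_recr big_ord0 /= add0r.
  by case: (0 \in s); case: (1 \in s); case: (2 \in s); rewrite ?scale1r ?scale0r.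
rewrite -(ler_pM2l (_ : 0 < m`!%:R)) ?ltr0n ?fact_gt0 // !mulrDr.
move: (detS [:: 0; 1; 2]) (detS [:: 0]) (detS [:: 1]) (detS [:: 2])
      (detS [:: 0; 1]) (detS [:: 0; 2]) (detS [:: 1; 2]).
rewrite /= !scale1r !scale0r !addr0 !add0r => -> -> -> -> -> -> ->.
rewrite -!big_split /=; apply: ler_sum => f _.
rewrite -!mulrDl ler_wpM2r // -!natrD ler_nat.
exact: forall_in_pairs_le (fun i => (f i).1).
Qed.
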